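(* For every integer $n\ge0$, the Hankel determinant $d(n,s,q)=\det\big(f(i+j,s,q)\big)_{i,j=0}^n$ equals $$d(n,s,q)=q^{\frac{n^2(n+1)}{2}}\,\frac{\prod_{j=0}^n\big(\frac{s}{q^{2j-1}};q^2\big)_{2j}\;\prod_{j=0}^n(q;q)_j}{\prod_{j=0}^n(-q;q)_{j+n}}.$$
   Context: $q,s$ are indeterminates. $(x;q)_n=\prod_{j=0}^{n-1}(1-q^jx)$. The Gaussian binomial coefficient is $\begin{bmatrix} n\\ j\end{bmatrix}_q=\frac{(q;q)_n}{(q;q)_j(q;q)_{n-j}}$ for $0\le j\le n$ and $0$ otherwise. $f(n,s,q)=\dfrac{\sum_{j=0}^n s^j\begin{bmatrix} n\\ j\end{bmatrix}_{q^2}}{(-q;q)_n}$. *)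

From HB Require Import structures.
From mathcomp Require Import all_boot all_order all_algebra.
Set Implicit Arguments. Unset Strict Implicit. Unset Printing Implicit Defensive.
Import Order.TTheory GRing.Theory Num.Theory.
Local Open Scope ring_scope.

Definition qpoch (F : fieldType) (x q : F) (n : nat) : F :=
  \prod_(j < n) (1 - q ^+ j * x).

Definition gauss_binom (F : fieldType) (q : F) (n j : nat) : F :=
  if (j <= n)%N then qpoch q q n / (qpoch q q j * qpoch q q (n - j)) else 0.

Definition fH (F : fieldType) (s q : F) (n : nat) : F :=
  (\sum_(j < n.+1) s ^+ j * gauss_binom (q ^+ 2) n j) / qpoch (- q) q n.

Definition hankel_d (F : fieldType) (s q : F) (n : nat) : F :=
  \det (\matrix_(i < n.+1, j < n.+1) fH s q (i + j)%N).

Definition K : fieldType := {fraction {poly {poly rat}}}.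
Definition qK : K := tofrac ((('X : {poly rat}))%:P : {poly {poly rat}}).
Definition sK : K := tofrac ('X : {poly {poly rat}}).

From HB Require Import structures.
From mathcomp Require Import all_boot all_order all_algebra.
From mathcomp Require Import ring zify.
Import Order.TTheory GRing.Theory Num.Theory.
Set Implicit Arguments. Unset Strict Implicit. Unset Printing Implicit Defensive.
Local Open Scope ring_scope.

(* The entries f(n) satisfy the three-term recurrence
     (1 + q^(n+2)) f(n+2) = (1 + s) f(n+1) - s (1 - q^(n+1)) f(n)
   inherited from the Rogers-Szego polynomials sum_j s^j [n j]_(q^2). For the moment
   functional L(x^n) = f(n) this is the q-Pearson equation
     L((x - 1)(x - s) p(x)) = - L((q^2 x^2 - s q) p(q x)),
   from which phi_i = prod_(m<i) (x - q^m) and psi_j = prod_(m<j) (x - s q^m) satisfy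
     L(phi_i psi_j) = q^(ij) prod_(k<i) (s - q^(2k+1)) (s q; q^2)_j / (-q; q)_(i+j).
   Since phi_i and psi_j are monic of degrees i and j, the Hankel determinant equals the
   determinant of these moments. Up to row and column factors this is the matrix
   q^(ij) / (-q; q)_(i+j) = p_j(q^i) / (-q; q)_(n+i) with p_j = x^j prod_(m<n-j) (1 + q^(j+m+1) x),
   i.e. a Vandermonde matrix in the q^i times a unitriangular matrix. *)

Section QPochhammer.
Variable F : fieldType.
Implicit Types x q : F.

Lemma qpoch0 x q : qpoch x q 0 = 1.
Proof. by rewrite /qpoch big_ord0. Qed.

Lemma qpochS x q n : qpoch x q n.+1 = qpoch x q n * (1 - q ^+ n * x).
Proof. by rewrite /qpoch big_ord_recr. Qed.

Lemma qpochSS q n : qpoch q q n.+1 = qpoch q q n * (1 - q ^+ n.+1).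
Proof. by rewrite qpochS exprSr. Qed.

Lemma qpochNS q n : qpoch (- q) q n.+1 = qpoch (- q) q n * (1 + q ^+ n.+1).
Proof. by rewrite qpochS mulrN opprK exprSr. Qed.

Lemma qpochND q m n :
  qpoch (- q) q (m + n) = qpoch (- q) q m * \prod_(k < n) (1 + q ^+ (m + k).+1).
Proof.
elim: n => [|n IHn]; first by rewrite addn0 big_ord0 mulr1.
by rewrite addnS qpochNS IHn big_ord_recr mulrA.
Qed.

Lemma qpoch_neq0 x q n :
  (forall k, (k < n)%N -> 1 - q ^+ k * x != 0) -> qpoch x q n != 0.
Proof. by move=> nz; apply/prodf_neq0 => k _; apply: nz. Qed.

Lemma qpochN_neq0 q n : (forall k, 1 + q ^+ k.+1 != 0) -> qpoch (- q) q n != 0.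
Proof. by move=> nz; apply: qpoch_neq0 => k _; rewrite mulrN opprK -exprSr. Qed.

End QPochhammer.

Section GaussBinomial.
Variables (F : fieldType) (Q : F).
Hypothesis nzQ : forall k, 1 - Q ^+ k.+1 != 0.

Lemma qpochQ_neq0 n : qpoch Q Q n != 0.
Proof. by apply: qpoch_neq0 => k _; rewrite -exprSr. Qed.

Lemma gauss_binomE n j :
  (j <= n)%N -> gauss_binom Q n j = qpoch Q Q n / (qpoch Q Q j * qpoch Q Q (n - j)).
Proof. by move=> lejn; rewrite /gauss_binom lejn. Qed.

Lemma gauss_binom_gt n j : (n < j)%N -> gauss_binom Q n j = 0.
Proof. by move=> ltnj; rewrite /gauss_binom leqNgt ltnj. Qed.

Lemma gauss_binomn0 n : gauss_binom Q n 0 = 1.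
Proof. by rewrite gauss_binomE // qpoch0 mul1r subn0 divff ?qpochQ_neq0. Qed.

Lemma gauss_binomnn n : gauss_binom Q n n = 1.
Proof. by rewrite gauss_binomE // subnn qpoch0 mulr1 divff ?qpochQ_neq0. Qed.

Lemma gauss_binomSS n j :
  gauss_binom Q n.+1 j.+1 = gauss_binom Q n j + Q ^+ j.+1 * gauss_binom Q n j.+1.
Proof.
have [ltjn | ltnj | ->] := ltngtP j n; last first.
- by rewrite (gauss_binom_gt (ltnSn n)) mulr0 addr0 !gauss_binomnn.
- by rewrite !gauss_binom_gt ?mulr0 ?addr0 // ltnS ltnW.
have [r ->] : exists r, n = (j + r.+1)%N by exists (n - j.+1)%N; lia.
rewrite !gauss_binomE; try lia.
have -> : ((j + r.+1).+1 - j.+1 = r.+1)%N by lia.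
have -> : (j + r.+1 - j = r.+1)%N by lia.
have -> : (j + r.+1 - j.+1 = r)%N by lia.
rewrite !qpochSS.
have -> : Q ^+ (j + r.+1).+1 = Q ^+ j.+1 * Q ^+ r.+1 by rewrite -exprD addSn addnS.
have nzj := qpochQ_neq0 j; have nzr := qpochQ_neq0 r.
have nzQj := nzQ j; have nzQr := nzQ r.
by field; rewrite nzj nzr nzQj nzQr.
Qed.

Lemma gauss_binom_absorb n j :
  (1 - Q ^+ j.+1) * gauss_binom Q n.+1 j.+1 = (1 - Q ^+ n.+1) * gauss_binom Q n j.
Proof.
have [lejn | ltnj] := leqP j n; last by rewrite !gauss_binom_gt ?mulr0.
rewrite !gauss_binomE // subSS !qpochSS.
have nzj := qpochQ_neq0 j; have nznj := qpochQ_neq0 (n - j); have nzQj := nzQ j.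
by field; rewrite nzj nznj nzQj.
Qed.

Definition rogers_szego (s : F) n := \sum_(j < n.+1) s ^+ j * gauss_binom Q n j.

Variable s : F.

Lemma rogers_szegoS n :
  rogers_szego s n.+1 = s * rogers_szego s n + \sum_(j < n.+1) (s * Q) ^+ j * gauss_binom Q n j.
Proof.
rewrite /rogers_szego big_ord_recl gauss_binomn0 expr0 mul1r.
under eq_bigr do rewrite gauss_binomSS mulrDr.
rewrite big_split /= big_distrr [X in _ = _ + X]big_ord_recl /= expr0 !mul1r.
rewrite [X in 1 + (_ + X) = _]big_ord_recr /= gauss_binom_gt // !mulr0 addr0.
rewrite gauss_binomn0 addrCA; congr (_ + _).
  by apply: eq_bigr => i _; rewrite exprS mulrA.
by congr (_ + _); apply: eq_bigr => i _; rewrite !exprS exprMn; ring.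
Qed.

Lemma rogers_szego_absorb n :
  \sum_(j < n.+2) s ^+ j * (1 - Q ^+ j) * gauss_binom Q n.+1 j
  = s * (1 - Q ^+ n.+1) * rogers_szego s n.
Proof.
rewrite big_ord_recl expr0 subrr mulr0 mul0r add0r /rogers_szego big_distrr.
by apply: eq_bigr => i _; rewrite -mulrA gauss_binom_absorb [s ^+ _]exprS /=; ring.
Qed.

Lemma rogers_szego_rec n :
  rogers_szego s n.+2
  = (1 + s) * rogers_szego s n.+1 - s * (1 - Q ^+ n.+1) * rogers_szego s n.
Proof.
rewrite rogers_szegoS -rogers_szego_absorb.
have -> : \sum_(j < n.+2) (s * Q) ^+ j * gauss_binom Q n.+1 j = rogers_szego s n.+1
    - \sum_(j < n.+2) s ^+ j * (1 - Q ^+ j) * gauss_binom Q n.+1 j.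
  by rewrite /rogers_szego -sumrB; apply: eq_bigr => i _; rewrite exprMn; ring.
ring.
Qed.

End GaussBinomial.

Section HankelEntries.
Variables (F : fieldType) (s q : F).
Hypothesis nzq2 : forall k, 1 - (q ^+ 2) ^+ k.+1 != 0.
Hypothesis nzq : forall k, 1 + q ^+ k.+1 != 0.

Lemma fHE n : fH s q n = rogers_szego (q ^+ 2) s n / qpoch (- q) q n.
Proof. by []. Qed.

Lemma fH0 : fH s q 0 = 1.
Proof. by rewrite fHE /rogers_szego big_ord1 gauss_binomn0 // qpoch0 mulr1 divr1. Qed.

Lemma fH1 : fH s q 1 = (1 + s) / (1 + q).
Proof.
rewrite fHE /rogers_szego big_ord_recr big_ord1 /= gauss_binomn0 // gauss_binomnn //.
by rewrite qpochNS qpoch0 expr0 !mul1r !expr1 !mulr1.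
Qed.

Lemma fH_rec n :
  (1 + q ^+ n.+2) * fH s q n.+2 = (1 + s) * fH s q n.+1 - s * (1 - q ^+ n.+1) * fH s q n.
Proof.
rewrite !fHE rogers_szego_rec // !qpochNS [(q ^+ 2) ^+ _]exprAC expr2.
have nzP := qpochN_neq0 n nzq; have nz1 := nzq n; have nz2 := nzq n.+1.
by field; rewrite nzP nz1 nz2.
Qed.

End HankelEntries.

Section MomentFunctional.
Variables (F : fieldType) (mu : nat -> F).

Definition moment (p : {poly F}) : F := \sum_(i < size p) p`_i * mu i.

Lemma moment_widen N (p : {poly F}) :
  (size p <= N)%N -> moment p = \sum_(i < N) p`_i * mu i.
Proof.
move=> leN; rewrite /moment (big_ord_widen N (fun i => p`_i * mu i)) // big_mkcond.
by apply: eq_bigr => i _; case: ltnP => // ?; rewrite nth_default ?mul0r.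
Qed.

Lemma moment_is_linear : linear_for *%R moment.
Proof.
move=> c p r; pose N := maxn (size p) (size r).
have leNp : (size p <= N)%N := leq_maxl _ _.
have leNr : (size r <= N)%N := leq_maxr _ _.
have leN : (size (c *: p + r)%R <= N)%N.
  by rewrite (leq_trans (size_polyD _ _)) // geq_max leNr (leq_trans (size_scale_leq _ _)).
rewrite !(moment_widen leN, moment_widen leNp, moment_widen leNr) mulr_sumr -big_split.
by apply: eq_bigr => i _; rewrite coefD coefZ mulrDl mulrA.
Qed.

HB.instance Definition _ :=
  GRing.isLinear.Build F {poly F} F *%R moment moment_is_linear.

Lemma momentXn n : moment 'X^n = mu n.
Proof.
rewrite /moment size_polyXn big_ord_recr /= coefXn eqxx mul1r big1 ?add0r //.
by move=> i _; rewrite coefXn ltn_eqF ?mul0r.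
Qed.

Lemma moment1 : moment 1 = mu 0.
Proof. by rewrite -(expr0 'X) momentXn. Qed.

Lemma moment_mul N (p r : {poly F}) : (size p <= N)%N -> (size r <= N)%N ->
  moment (p * r) = \sum_(x < N) \sum_(y < N) p`_x * r`_y * mu (x + y).
Proof.
move=> leNp leNr; rewrite -{1}(take_poly_id leNp) -{1}(take_poly_id leNr).
rewrite /take_poly !poly_def mulr_suml linear_sum; apply: eq_bigr => x _.
rewrite mulr_sumr linear_sum; apply: eq_bigr => y _.
by rewrite -scalerAl -scalerAr !linearZ /= -exprD momentXn mulrA.
Qed.

Lemma det_monic_coef n (G : 'I_n -> {poly F}) :
  (forall i, G i \is monic) -> (forall i, size (G i) = i.+1) ->
  \det (\matrix_(i < n, m < n) (G i)`_m) = 1.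
Proof.
move=> monG szG; rewrite det_trig; last first.
  by apply/is_trig_mxP => i m ltim; rewrite mxE nth_default // szG.
by rewrite big1 // => i _; rewrite mxE -(monicP (monG i)) lead_coefE szG.
Qed.

Lemma det_hankel_monic n (G H : 'I_n -> {poly F}) :
  (forall i, G i \is monic) -> (forall i, size (G i) = i.+1) ->
  (forall j, H j \is monic) -> (forall j, size (H j) = j.+1) ->
  \det (\matrix_(i < n, j < n) mu (i + j))
  = \det (\matrix_(i < n, j < n) moment (G i * H j)).
Proof.
move=> monG szG monH szH.
set CG := \matrix_(i < n, m < n) (G i)`_m; set CH := \matrix_(j < n, m < n) (H j)`_m.
have -> : \matrix_(i < n, j < n) moment (G i * H j)
          = CG *m \matrix_(i < n, j < n) mu (i + j) *m CH^T.
  apply/matrixP => i j; rewrite !mxE (@moment_mul n) ?szG ?szH //.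
  rewrite exchange_big; apply: eq_bigr => y _; rewrite !mxE mulr_suml.
  by apply: eq_bigr => x _; rewrite !mxE /=; ring.
by rewrite !det_mulmx det_tr !det_monic_coef // mul1r mulr1.
Qed.

End MomentFunctional.

Section QPearson.
Variables (F : fieldType) (s q : F) (mu : nat -> F).
Hypothesis nzq : forall k, 1 + q ^+ k.+1 != 0.
Hypothesis mu_rec : forall n,
  (1 + q ^+ n.+2) * mu n.+2 = (1 + s) * mu n.+1 - s * (1 - q ^+ n.+1) * mu n.
Hypothesis mu0 : mu 0 = 1.
Hypothesis mu1 : mu 1 = (1 + s) / (1 + q).

Local Notation L := (moment mu).
Local Notation P := (qpoch (- q) q).

Lemma moment_pearsonXn n :
  L (('X - 1) * ('X - s%:P) * 'X^n)
  = - (q ^+ n * L ((q ^+ 2 *: 'X ^+ 2 - (s * q)%:P) * 'X^n)).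
Proof.
have -> : ('X - 1) * ('X - s%:P) * 'X^n
          = 'X^(n.+2) - (1 + s) *: 'X^(n.+1) + s *: 'X^n.
  by rewrite -!mul_polyC polyCD !exprS; ring.
have -> : (q ^+ 2 *: 'X ^+ 2 - (s * q)%:P) * 'X^n = q ^+ 2 *: 'X^(n.+2) - (s * q) *: 'X^n.
  by rewrite -!mul_polyC !exprS; ring.
rewrite !linearD !linearN !linearZ /= !momentXn.
have -> : (1 + s) * mu n.+1 = (1 + q ^+ n.+2) * mu n.+2 + s * (1 - q ^+ n.+1) * mu n.
  by rewrite mu_rec; ring.
by rewrite !exprS; ring.
Qed.

Lemma moment_pearson (p : {poly F}) :
  L (('X - 1) * ('X - s%:P) * p)
  = - L ((q ^+ 2 *: 'X ^+ 2 - (s * q)%:P) * (p \Po (q *: 'X))).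
Proof.
rewrite -[p]coefK poly_def linear_sum mulr_sumr !linear_sum mulr_sumr linear_sum.
rewrite -sumrN; apply: eq_bigr => i _.
rewrite linearZ /= comp_Xn_poly exprZn -!scalerAr !linearZ /= moment_pearsonXn.
by rewrite mulrN mulrA.
Qed.

Definition qshift_poly (c : F) j : {poly F} := \prod_(m < j) ('X - (c * q ^+ m)%:P).

Lemma qshift_poly0 c : qshift_poly c 0 = 1.
Proof. by rewrite /qshift_poly big_ord0. Qed.

Lemma qshift_polyS c j : qshift_poly c j.+1 = qshift_poly c j * ('X - (c * q ^+ j)%:P).
Proof. by rewrite /qshift_poly big_ord_recr. Qed.

Lemma qshift_polySl c j : qshift_poly c j.+1 = ('X - c%:P) * qshift_poly (c * q) j.
Proof.
rewrite /qshift_poly big_ord_recl expr0 mulr1; congr (_ * _).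
by apply: eq_bigr => i _; rewrite [q ^+ _]exprS mulrA.
Qed.

Lemma qshift_poly_monic c j : qshift_poly c j \is monic.
Proof. exact: monic_prod_XsubC. Qed.

Lemma size_qshift_poly c j : size (qshift_poly c j) = j.+1.
Proof. by rewrite size_prod_XsubC [index_enum _]unlock -enumT size_enum_ord. Qed.

Lemma qshift_poly_comp c j : qshift_poly (c * q) j \Po (q *: 'X) = q ^+ j *: qshift_poly c j.
Proof.
elim: j => [|j IHj]; first by rewrite !qshift_poly0 comp_polyC scale1r.
rewrite !qshift_polyS comp_polyM IHj comp_polyB comp_polyX comp_polyC.
by rewrite -!mul_polyC exprS !polyCM; ring.
Qed.

Lemma mulX_qshift_poly c j :
  'X * qshift_poly c j = qshift_poly c j.+1 + (c * q ^+ j) *: qshift_poly c j.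
Proof. by rewrite qshift_polyS -!mul_polyC; ring. Qed.

Lemma moment_qshift_rec k :
  (1 + q ^+ k.+2) * L (qshift_poly s k.+2)
  = (1 - s * q ^+ k.+1 - q ^+ k.+2 * (s * q ^+ k.+1 + s * q ^+ k)) * L (qshift_poly s k.+1)
    - q ^+ k * (q ^+ 2 * (s * q ^+ k) ^+ 2 - s * q) * L (qshift_poly s k).
Proof.
have E := moment_pearson (qshift_poly (s * q) k).
rewrite -mulrA -qshift_polySl qshift_poly_comp in E.
have E1 : ('X - 1) * qshift_poly s k.+1
          = qshift_poly s k.+2 + (s * q ^+ k.+1 - 1) *: qshift_poly s k.+1.
  by rewrite mulrBl mul1r mulX_qshift_poly scalerBl scale1r addrA.
have E2 : (q ^+ 2 *: 'X ^+ 2 - (s * q)%:P) * (q ^+ k *: qshift_poly s k)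
          = q ^+ k.+2 *: qshift_poly s k.+2
          + (q ^+ k.+2 * (s * q ^+ k.+1 + s * q ^+ k)) *: qshift_poly s k.+1
          + (q ^+ k * (q ^+ 2 * (s * q ^+ k) ^+ 2 - s * q)) *: qshift_poly s k.
  rewrite !qshift_polyS -!mul_polyC !exprS !(polyCD, polyCB, polyCM) /=.
  by rewrite ?expr0 ?mulr1 ?polyC1; ring.
move: E; rewrite E1 E2 !linearD !linearZ /= => /eqP; rewrite -subr_eq0 => /eqP E.
by apply/eqP; rewrite -subr_eq0 -E; apply/eqP; ring.
Qed.

Lemma moment_qshift j : L (qshift_poly s j) = qpoch (s * q) (q ^+ 2) j / P j.
Proof.
suff IH k : L (qshift_poly s k) = qpoch (s * q) (q ^+ 2) k / P k
            /\ L (qshift_poly s k.+1) = qpoch (s * q) (q ^+ 2) k.+1 / P k.+1.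
  by case: (IH j).
elim: k => [|k [IHk IHk1]].
  have -> : qshift_poly s 1 = 'X^1 - s *: 'X^0.
    by rewrite qshift_polyS qshift_poly0 mul1r expr0 mulr1 -mul_polyC mulr1 expr1.
  rewrite qshift_poly0 moment1 linearB linearZ /= !momentXn mu0 mu1.
  rewrite qpochS qpochNS !qpoch0 !expr0 divr1.
  have nzq1 := nzq 0; rewrite expr1 in nzq1.
  by split=> //; rewrite !expr1 !mul1r mulr1; field; rewrite nzq1.
split=> //; apply: (mulfI (nzq k.+1)).
rewrite moment_qshift_rec IHk IHk1 !qpochNS !qpochS ![(q ^+ 2) ^+ _]exprAC.
have nzP := qpochN_neq0 k nzq; have nz1 := nzq k; have nz2 := nzq k.+1.
by rewrite !exprS in nz1 nz2 *; field; rewrite nzP nz1 nz2.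
Qed.

Definition s_minus_odd_prod i := \prod_(k < i) (s - q ^+ k.*2.+1).

Lemma moment_qshift_mul i j :
  L (qshift_poly 1 i * qshift_poly s j)
  = q ^+ (i * j) * s_minus_odd_prod i * qpoch (s * q) (q ^+ 2) j / P (i + j).
Proof.
elim: i j => [|i IHi] j.
  by rewrite qshift_poly0 mul1r moment_qshift /s_minus_odd_prod big_ord0 mulr1 mul1r.
have -> : qshift_poly 1 i.+1 * qshift_poly s j = qshift_poly 1 i * qshift_poly s j.+1
          + (s * q ^+ j - q ^+ i) *: (qshift_poly 1 i * qshift_poly s j).
  by rewrite !qshift_polyS -!mul_polyC !(polyCD, polyCB, polyCM) mul1r; ring.
rewrite linearD linearZ /= !IHi /s_minus_odd_prod big_ord_recr /= qpochS.
rewrite addnS addSn !qpochNS mulnS mulSn [(q ^+ 2) ^+ _]exprAC -addnn.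
have nzP := qpochN_neq0 (i + j) nzq; have nz := nzq (i + j).
by rewrite !exprS !exprD in nz *; field; rewrite nzP nz.
Qed.

End QPearson.

Section Determinants.
Variable F : fieldType.

Lemma det_scale_rows_cols n (u w : 'I_n -> F) (A : 'I_n -> 'I_n -> F) :
  \det (\matrix_(i, j) (u i * A i j * w j))
  = (\prod_i u i) * (\prod_j w j) * \det (\matrix_(i, j) A i j).
Proof.
have -> : \matrix_(i, j) (u i * A i j * w j)
          = diag_mx (\row_i u i) *m \matrix_(i, j) A i j *m diag_mx (\row_j w j).
  by apply/matrixP => i j; rewrite mul_mx_diag mul_diag_mx !mxE.
rewrite !det_mulmx !det_diag mulrAC.
by congr (_ * _ * _); apply: eq_bigr => i _; rewrite mxE.
Qed.

Lemma det_horner_trig n (p : 'I_n -> {poly F}) (x : 'I_n -> F) :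
  (forall j, (size (p j) <= n)%N) ->
  (forall j k : 'I_n, (k < j)%N -> (p j)`_k = 0) -> (forall j, (p j)`_j = 1) ->
  \det (\matrix_(i, j) (p j).[x i]) = \prod_(i < n) \prod_(j < n | (i < j)%N) (x j - x i).
Proof.
move=> szp p_trig p_diag; pose C := \matrix_(k < n, j < n) (p j)`_k.
have -> : \matrix_(i, j) (p j).[x i] = (Vandermonde n (\row_k x k))^T *m C.
  apply/matrixP => i j; rewrite !mxE (horner_coef_wide _ (szp j)).
  by apply: eq_bigr => k _; rewrite !mxE mulrC.
rewrite det_mulmx det_tr det_Vandermonde.
have -> : \det C = 1.
  rewrite det_trig; last by apply/is_trig_mxP => k j ltkj; rewrite mxE p_trig.
  by rewrite big1 // => j _; rewrite mxE p_diag.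
by rewrite mulr1; apply: eq_bigr => i _; apply: eq_bigr => j _; rewrite !mxE.
Qed.

End Determinants.

Section QVandermonde.
Variables (F : fieldType) (q : F).
Hypothesis nzq : forall k, 1 + q ^+ k.+1 != 0.

Local Notation P := (qpoch (- q) q).

Lemma size_prod_1addZX k (c : nat -> F) :
  (size (\prod_(m < k) (1 + c m *: 'X))%R <= k.+1)%N.
Proof.
elim: k => [|k IHk]; first by rewrite big_ord0 size_poly1.
rewrite big_ord_recr /= (leq_trans (size_polyMleq _ _)) //.
have sz_k : (size (1 + c k *: 'X)%R <= 2)%N.
  by rewrite (leq_trans (size_polyD _ _)) // geq_max size_poly1 /=
    (leq_trans (size_scale_leq _ _)) ?size_polyX.
by rewrite -subn1 leq_subLR (leq_trans (leq_add IHk sz_k)) // addnC.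
Qed.

Definition qtail_poly n j : {poly F} :=
  'X^j * \prod_(m < n - j) (1 + q ^+ (j + m).+1 *: 'X).

Lemma size_qtail_poly n j : (j <= n)%N -> (size (qtail_poly n j) <= n.+1)%N.
Proof.
move=> lejn; rewrite (leq_trans (size_polyMleq _ _)) // size_polyXn.
by have := size_prod_1addZX (n - j) (fun m => q ^+ (j + m).+1); lia.
Qed.

Lemma coef_qtail_poly_lt n j k : (k < j)%N -> (qtail_poly n j)`_k = 0.
Proof. by move=> ltkj; rewrite coefXnM ltkj. Qed.

Lemma coef_qtail_poly_diag n j : (qtail_poly n j)`_j = 1.
Proof.
rewrite coefXnM ltnn subnn -horner_coef0 horner_prod.
by rewrite big1 // => m _; rewrite hornerD hornerZ hornerX hornerC mulr0 addr0.
Qed.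

Lemma qpow_div_qpoch_qtail n i j : (j <= n)%N ->
  q ^+ (i * j) / P (i + j) = (P (n + i))^-1 * (qtail_poly n j).[q ^+ i].
Proof.
move=> lejn; rewrite hornerM hornerXn horner_prod -exprM mulnC.
have -> : (n + i = i + j + (n - j))%N by lia.
rewrite (qpochND q (i + j)).
under eq_bigr => m _ do rewrite hornerD hornerZ hornerX hornerC -exprD.
have -> : \prod_(m < n - j) (1 + q ^+ ((j + m).+1 + i))
          = \prod_(m < n - j) (1 + q ^+ (i + j + m).+1).
  by apply: eq_bigr => m _; congr (1 + q ^+ _); lia.
have nzP := qpochN_neq0 (i + j) nzq.
have nz : \prod_(m < n - j) (1 + q ^+ (i + j + m).+1) != 0 by apply/prodf_neq0.
by field; rewrite nzP nz.
Qed.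

Lemma det_qpow_div_qpoch n :
  \det (\matrix_(i < n.+1, j < n.+1) (q ^+ (i * j) / P (i + j)))
  = (\prod_(i < n.+1) \prod_(j < n.+1 | (i < j)%N) (q ^+ j - q ^+ i))
    / \prod_(i < n.+1) P (n + i).
Proof.
have -> : \matrix_(i < n.+1, j < n.+1) (q ^+ (i * j) / P (i + j))
          = \matrix_(i, j) ((P (n + i))^-1 * (qtail_poly n j).[q ^+ i] * 1).
  by apply/matrixP => i j; rewrite !mxE mulr1 (qpow_div_qpoch_qtail (n := n)) // -ltnS.
rewrite det_scale_rows_cols det_horner_trig => [|j|j k|j].
- by rewrite big1_eq mulr1 prodfV mulrC.
- by rewrite size_qtail_poly // -ltnS.
- exact: coef_qtail_poly_lt.
- exact: coef_qtail_poly_diag.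
Qed.

End QVandermonde.

Section ClosedForm.
Variables (F : fieldType) (s q : F).
Hypothesis nzq0 : q != 0.

Lemma prod_qpow_sub j :
  \prod_(i < j) (q ^+ j - q ^+ i) = (-1) ^+ j * q ^+ 'C(j, 2) * qpoch q q j.
Proof.
elim: j => [|j IHj]; first by rewrite big_ord0 qpoch0 !expr0 !mulr1.
rewrite big_ord_recl expr0.
have -> : \prod_(i < j) (q ^+ j.+1 - q ^+ bump 0 i) = q ^+ j * \prod_(i < j) (q ^+ j - q ^+ i).
  have prodq : \prod_(i < j) q = q ^+ j by rewrite prodr_const card_ord.
  rewrite -{1}prodq -big_split /=.
  by apply: eq_bigr => i _; rewrite !exprS mulrBr.
by rewrite IHj binS bin1 qpochSS !exprD !exprS; ring.
Qed.

Lemma prod_prod_qpow_sub n :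
  \prod_(i < n.+1) \prod_(j < n.+1 | (i < j)%N) (q ^+ j - q ^+ i)
  = \prod_(j < n.+1) ((-1) ^+ j * q ^+ 'C(j, 2) * qpoch q q j).
Proof.
under eq_bigr do rewrite big_mkcond.
rewrite exchange_big; apply: eq_bigr => j _; rewrite -prod_qpow_sub -big_mkcond /=.
by rewrite (big_ord_widen_cond n.+1 predT (fun i => q ^+ j - q ^+ i)) // ltnW.
Qed.

Lemma prod_neg_odd_qpow j : \prod_(m < j) (- q ^+ m.*2.+1) = (-1) ^+ j * q ^+ (j * j).
Proof.
elim: j => [|j IHj]; first by rewrite big_ord0 mul0n !expr0 mulr1.
rewrite big_ord_recr /= IHj.
have -> : (j.+1 * j.+1 = j * j + j.*2.+1)%N by rewrite -addnn; lia.
by rewrite exprD !exprS; ring.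
Qed.

Lemma s_minus_odd_prod_qpoch j :
  s_minus_odd_prod s q j * qpoch (s * q) (q ^+ 2) j
  = (-1) ^+ j * q ^+ (j * j) * qpoch (s / q ^ ((2 * j)%N%:Z - 1)) (q ^+ 2) (2 * j).
Proof.
(* The last j factors of (s q^(1-2j); q^2)_(2j) form (s q; q^2)_j; its first j factors,
   read backwards, are (s - q^(2m+1)) / (- q^(2m+1)). *)
case: j => [|k]; first by rewrite /s_minus_odd_prod big_ord0 muln0 !qpoch0 !expr0 !mulr1.
have -> : q ^ ((2 * k.+1)%N%:Z - 1) = q ^+ k.*2.+1.
  have -> : (2 * k.+1 = k.*2.+2)%N by rewrite -addnn; lia.
  by rewrite intS [1 + _]addrC addrK -exprnP.
set j := k.+1; set c := q ^+ k.*2.+1.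
have nzc : c != 0 by rewrite expf_neq0.
rewrite [(2 * j)%N]mul2n -addnn /qpoch big_split_ord -prod_neg_odd_qpow mulrA.
congr (_ * _); last first.
  apply: eq_bigr => m _.
  have -> : (q ^+ 2) ^+ m * (s * q) = s * q ^+ m.*2.+1.
    by rewrite -exprM mulrCA -exprSr mul2n.
  have -> : (q ^+ 2) ^+ (j + m) = c * q ^+ m.*2.+1.
    by rewrite -exprM -exprD /c /j; congr (q ^+ _); lia.
  by field.
rewrite /s_minus_odd_prod [X in _ * X](reindex_inj rev_ord_inj) /= -big_split /=.
apply: eq_bigr => m _.
have nzm : q ^+ m.*2.+1 != 0 by rewrite expf_neq0.
have -> : (q ^+ 2) ^+ (j - m.+1) = c / q ^+ m.*2.+1.
  apply: (mulIf nzm); rewrite divfK // -exprM /c -exprD; congr (q ^+ _).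
  by have := ltn_ord m; rewrite /j; lia.
by field; rewrite nzc nzm.
Qed.

End ClosedForm.

Lemma sum_sqr_add_bin2 n :
  (\sum_(j < n.+1) (j * j + 'C(j, 2)) = (n ^ 2 * (n + 1)) %/ 2)%N.
Proof.
have dbl_bin2 j : (2 * 'C(j, 2) = j * j.-1)%N.
  elim: j => [|j IHj] //; rewrite binS bin1 mulnDr IHj.
  by case: j {IHj} => //= j; lia.
suff dbl_sum : (2 * \sum_(j < n.+1) (j * j + 'C(j, 2)) = n ^ 2 * (n + 1))%N.
  by rewrite -dbl_sum mulKn.
elim: n => [|n IHn]; first by rewrite big_ord1.
by rewrite big_ord_recr /= mulnDr IHn; have := dbl_bin2 n.+1; lia.
Qed.

Section HankelDeterminant.
Variables (F : fieldType) (s q : F).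
Hypothesis nzq0 : q != 0.
Hypothesis nzq2 : forall k, 1 - (q ^+ 2) ^+ k.+1 != 0.
Hypothesis nzq : forall k, 1 + q ^+ k.+1 != 0.

Lemma hankel_d_closed_form n :
  hankel_d s q n =
  q ^+ ((n ^ 2 * (n + 1)) %/ 2)%N *
  ((\prod_(j < n.+1) qpoch (s / q ^ ((2 * j)%N%:Z - 1)) (q ^+ 2) (2 * j)%N) *
   (\prod_(j < n.+1) qpoch q q j)) /
  (\prod_(j < n.+1) qpoch (- q) q (j + n)%N).
Proof.
rewrite /hankel_d (@det_hankel_monic _ (fH s q) _ (fun i => qshift_poly q 1 i)
                                     (fun j => qshift_poly q s j));
  try by move=> i; rewrite ?qshift_poly_monic ?size_qshift_poly.
have -> : \matrix_(i < n.+1, j < n.+1) moment (fH s q) (qshift_poly q 1 i * qshift_poly q s j)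
          = \matrix_(i, j) (s_minus_odd_prod s q i * (q ^+ (i * j) / qpoch (- q) q (i + j))
                            * qpoch (s * q) (q ^+ 2) j).
  apply/matrixP => i j; rewrite !mxE moment_qshift_mul ?fH0 ?fH1 //; last exact: fH_rec.
  by rewrite !mulrA [q ^+ _ * _]mulrC mulrAC.
rewrite det_scale_rows_cols det_qpow_div_qpoch // prod_prod_qpow_sub mulrA -!big_split /=.
have sign2 j : (-1) ^+ j * (-1) ^+ j = 1 :> F by rewrite -exprMn mulrNN mulr1 expr1n.
under eq_bigr => j _.
  rewrite s_minus_odd_prod_qpoch // mulrACA [X in X * _]mulrACA sign2 mul1r -exprD.
over.
rewrite big_split /= prodrXr sum_sqr_add_bin2 big_split /=.
by under [X in _ / X]eq_bigr do rewrite addnC.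
Qed.

End HankelDeterminant.

Lemma qK_neq0 : qK != 0.
Proof. by rewrite /qK tofrac_eq0 polyC_eq0 polyX_eq0. Qed.

Lemma qK_1subXn_neq0 k : 1 - qK ^+ k.+1 != 0.
Proof.
rewrite /qK -tofracXn -tofrac1 -tofracB tofrac_eq0 -rmorphXn -polyC1 -polyCB polyC_eq0.
apply/eqP => /(congr1 (fun p : {poly rat} => p`_k.+1)).
by rewrite coefB coef1 coefXn eqxx coef0 sub0r => /eqP; rewrite oppr_eq0 oner_eq0.
Qed.

Lemma qK_1addXn_neq0 k : 1 + qK ^+ k.+1 != 0.
Proof.
rewrite /qK -tofracXn -tofrac1 -tofracD tofrac_eq0 -rmorphXn -polyC1 -polyCD polyC_eq0.
apply/eqP => /(congr1 (fun p : {poly rat} => p`_k.+1)).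
by rewrite coefD coef1 coefXn eqxx coef0 add0r => /eqP; rewrite oner_eq0.
Qed.

Theorem theorem3p1 (n : nat) :
  hankel_d sK qK n =
  qK ^+ ((n ^ 2 * (n + 1)) %/ 2)%N *
  ((\prod_(j < n.+1) qpoch (sK / qK ^ ((2 * j)%N%:Z - 1)) (qK ^+ 2) (2 * j)%N) *
   (\prod_(j < n.+1) qpoch qK qK j)) /
  (\prod_(j < n.+1) qpoch (- qK) qK (j + n)%N).
Proof.
apply: hankel_d_closed_form => [|k|k]; first exact: qK_neq0.
- by rewrite -exprM qK_1subXn_neq0.
- exact: qK_1addXn_neq0.
Qed.
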